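(* Let $\mathcal C$ be a concept hierarchy with maximum level $2$ and let $\mathcal N$ be a network with maximum layer $1$ (with fixed weights, all engaged flags always $0$). Let $r_1,r_2$ satisfy: $0\le r_1\le r_2\le1$; $r_1k$ is not an integer; $(r_2')^2\le 2r_1'-(r_1')^2$, where $r_1'k=\lfloor r_1k\rfloor$ and $r_2'k=\lceil r_2k\rceil$. Then $\mathcal N$ does not $(r_1,r_2)$-recognize $\mathcal C$ in the sense of Assumptions 1–3.
   Context: Data model. Fix positive integers $\ell_{max},n,k$. A universal set $D$ of concepts is partitioned into disjoint $D_0,\dots,D_{\ell_{max}}$ with $|D_0|=n$. A concept hierarchy with maximum level $\ell_{max}$ consists of $C\subseteq D$ and $children$: with $C_\ell=C\cap D_\ell$, each $c\in C_\ell$ ($\ell\ge1$) has $children(c)\subseteq C_{\ell-1}$ of size $k$; $|C_{\ell_{max}}|=k$; distinct concepts on the same level have disjoint children sets. $leaves(c)$ is the set of level-$0$ descendants of $c$ (descendants: $c$ itself and, recursively, children of descendants). For $B\subseteq D_0$ and $r\in[0,1]$: $B_0=B\cap C_0$, $B_\ell=\{c\in C_\ell:|children(c)\cap B_{\ell-1}|\ge rk\}$, $supported_r(B)=\bigcup_\ell B_\ell$. Network model. Layers $N_0,\dots,N_{\ell'_{max}}$ of $n$ neurons each; every neuron of $N_\ell$ has an edge to every neuron of $N_{\ell+1}$, no other edges; bijection $rep:D_0\to N_0$. Each edge $(v,u)$ has a fixed weight in $[0,1]$ and each non-input neuron has a threshold $\tau$; discrete time; input firing is set externally; a non-input neuron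 $u$ fires at time $t$ iff $\sum_v weight(v,u)y^v(t-1)\ge\tau$, the sum over neurons $v$ of the layer below. $B\subseteq D_0$ is presented at time $t$ if the input neurons firing at time $t$ are exactly $rep(B)$. Assumptions: (1) every concept $c\in C$ has a unique designated neuron $rep(c)$ (for level-$0$ concepts the input neuron $rep(c)$; for concepts of level $\ge1$ a non-input neuron, in any layer); (2) for every $B\subseteq C_0$ presented at time $t$, if $c\in supported_{r_2}(B)$ then $rep(c)$ fires at time $t+layer(rep(c))$; (3) for every $B\subseteq C_0$ presented at time $t$, if $c\notin supported_{r_1}(B)$ then $rep(c)$ does not fire at time $t+layer(rep(c))$. *)

From HB Require Import structures.
From mathcomp Require Import all_boot all_order all_algebra.
From mathcomp Require Import reals.
Set Implicit Arguments. Unset Strict Implicit. Unset Printing Implicit Defensive.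
Import Order.TTheory GRing.Theory Num.Theory.
Local Open Scope ring_scope.

Section Hierarchy.
Variables (D : finType) (lvl : D -> nat).

Definition Dlev (l : nat) : {set D} := [set d | lvl d == l].

Definition is_hierarchy (n lmax k : nat) (C : {set D}) (children : D -> {set D}) : Prop :=
  [/\ (forall d : D, (lvl d <= lmax)%N),
      #|Dlev 0| = n,
      (forall c, c \in C -> (1 <= lvl c <= lmax)%N ->
         children c \subset C :&: Dlev (lvl c).-1 /\ #|children c| = k),
      #|C :&: Dlev lmax| = k &
      (forall c c', c \in C -> c' \in C -> (1 <= lvl c)%N -> lvl c = lvl c' ->
         c != c' -> [disjoint children c & children c'])].

Variable R : realType.
Variables (k : nat) (C : {set D}) (children : D -> {set D}).

Fixpoint Blev (r : R) (B : {set D}) (l : nat) : {set D} :=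
  match l with
  | 0 => B :&: (C :&: Dlev 0)
  | l'.+1 => [set c in C :&: Dlev l'.+1 |
               r * k%:R <= (#|children c :&: Blev r B l'|)%:R]
  end.

Definition supported (lmax : nat) (r : R) (B : {set D}) : {set D} :=
  \bigcup_(l < lmax.+1) Blev r B l.

End Hierarchy.

Section Network.
Variables (R : realType) (n L : nat).
(* Neurons are pairs (layer, index) with layer <= L, index : 'I_n.
   w l i j = weight of the edge from neuron (l,i) to neuron (l+1,j);
   tau l j = threshold of the non-input neuron (l,j), 1 <= l <= L.
   An execution y t l i = whether neuron (l,i) fires at time t. *)
Variables (w : nat -> 'I_n -> 'I_n -> R) (tau : nat -> 'I_n -> R).

Definition weights_ok : Prop :=
  forall l i j, (l < L)%N -> 0 <= w l i j <= 1.

Definition is_execution (y : nat -> nat -> 'I_n -> bool) : Prop :=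
  forall t l j, (1 <= l <= L)%N ->
    y t.+1 l j = (tau l j <= \sum_(i < n) w l.-1 i j * (y t l.-1 i)%:R).

End Network.

Section Recognition.
Variables (R : realType) (n L : nat) (w : nat -> 'I_n -> 'I_n -> R) (tau : nat -> 'I_n -> R).
Variables (D : finType) (lvl : D -> nat) (lmax k : nat) (C : {set D}) (children : D -> {set D}).
(* rep d = (layer, index) of the neuron representing concept d. *)
Variable rep : D -> nat * 'I_n.

Definition input_rep_ok : Prop :=
  [/\ (forall d, d \in Dlev lvl 0 -> (rep d).1 = 0%N),
      {in Dlev lvl 0 &, injective (fun d => (rep d).2)} &
      (forall i : 'I_n, exists2 d, d \in Dlev lvl 0 & (rep d).2 = i)].

Definition presented (y : nat -> nat -> 'I_n -> bool) (t : nat) (B : {set D}) : Prop :=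
  forall i : 'I_n, y t 0%N i = (i \in [set (rep d).2 | d in B]).

Definition assumption1 : Prop :=
  forall c, c \in C -> (1 <= lvl c)%N -> (1 <= (rep c).1 <= L)%N.

Definition assumption2 (r2 : R) : Prop :=
  forall y, is_execution L w tau y -> forall t (B : {set D}),
    B \subset C :&: Dlev lvl 0 -> presented y t B ->
    forall c, c \in C -> c \in supported lvl k C children lmax r2 B ->
      y (t + (rep c).1)%N (rep c).1 (rep c).2.

Definition assumption3 (r1 : R) : Prop :=
  forall y, is_execution L w tau y -> forall t (B : {set D}),
    B \subset C :&: Dlev lvl 0 -> presented y t B ->
    forall c, c \in C -> c \notin supported lvl k C children lmax r1 B ->
      ~~ y (t + (rep c).1)%N (rep c).1 (rep c).2.

Definition recognizes (r1 r2 : R) : Prop :=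
  [/\ assumption1, assumption2 r2 & assumption3 r1].

End Recognition.

(* The level-2 concept c is represented by one layer-1 neuron, that is, by a threshold
   unit with nonnegative weights on the inputs.  Put a = floor (r1 k), b = ceil (r2 k) and
   let W be the total weight of the k^2 grandchildren of c.  Averaging twice yields b
   children of c and b grandchildren below each of them, of total weight at most
   (b/k)^2 W: an r2-supported input, on which the unit must fire.  Averaging twice again
   yields a children of c such that all grandchildren below them, together with
   a grandchildren below every other child, weigh at least (a/k)(2 - a/k) W; in this
   input at most a < r1 k children are r1-supported, so the unit must stay silent.  The
   hypothesis (b/k)^2 <= 2a/k - (a/k)^2 makes the first input no heavier than the second. *)

From HB Require Import structures.
From mathcomp Require Import all_boot all_order all_algebra.
From mathcomp Require Import reals.
From mathcomp Require Import ring lra.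
Set Implicit Arguments. Unset Strict Implicit. Unset Printing Implicit Defensive.
Import Order.TTheory GRing.Theory Num.Theory.
Local Open Scope ring_scope.

Lemma exists_subset_avg_le (R : realDomainType) (T : finType) (f : T -> R)
    (X : {set T}) (m : nat) : (m <= #|X|)%N ->
  exists Y : {set T}, [/\ Y \subset X, #|Y| = m &
    #|X|%:R * \sum_(i in Y) f i <= m%:R * \sum_(i in X) f i].
Proof.
move cardX : #|X| => N; elim: N X cardX => [|N IH] X cardX le_mN.
  by exists X; rewrite subxx cardX; case: m le_mN.
have [-> | ne_mN] := eqVneq m N.+1; first by exists X; rewrite subxx cardX.
have [x0 Xx0] : exists x0, x0 \in X by apply/card_gt0P; rewrite cardX.
case: (arg_maxP f (P := [in X]) Xx0) => x Xx max_x.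
have cardXx : #|X :\ x| = N by move: cardX; rewrite (cardsD1 x X) Xx => -[].
have le_mN' : (m <= N)%N by rewrite -ltnS ltn_neqAle ne_mN.
have [Y [sub_YX cardY avgY]] := IH _ cardXx le_mN'.
exists Y; split => //; first exact: subset_trans sub_YX (subsetDl _ _).
have le_Y_max : \sum_(i in Y) f i <= m%:R * f x.
  rewrite -cardY -sum1_card natr_sum mulr_suml; apply: ler_sum => i Yi.
  by rewrite mul1r; apply: max_x; exact: subsetP (subsetDl X [set x]) _ (subsetP sub_YX _ Yi).
rewrite (big_setD1 x Xx) -addn1 natrD mulrDl mul1r mulrDr addrC.
exact: lerD.
Qed.

Lemma exists_subset_avg_ge (R : realDomainType) (T : finType) (f : T -> R)
    (X : {set T}) (m : nat) : (m <= #|X|)%N ->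
  exists Y : {set T}, [/\ Y \subset X, #|Y| = m &
    m%:R * \sum_(i in X) f i <= #|X|%:R * \sum_(i in Y) f i].
Proof.
move=> le_mX; have [Y [sub_YX cardY avgY]] := exists_subset_avg_le (fun i => - f i) le_mX.
by exists Y; split => //; move: avgY; rewrite !sumrN !mulrN lerN2.
Qed.

Section DisjointUnion.
Variables (I T : finType) (P : {set I}) (ch : I -> {set T}).
Hypothesis disjoint_ch : {in P &, forall i j, i != j -> [disjoint ch i & ch j]}.
Variable F : I -> {set T}.
Hypothesis sub_F_ch : {in P, forall i, F i \subset ch i}.

Lemma setI_bigcup_disjoint i : i \in P -> ch i :&: \bigcup_(j in P) F j = F i.
Proof.
move=> Pi; apply/setP => x; rewrite inE; apply/andP/idP => [[ch_x] | Fx].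
  case/bigcupP => j Pj Fjx; have [-> // | ne_ij] := eqVneq i j.
  by have := disjointFr (disjoint_ch Pi Pj ne_ij) ch_x; rewrite (subsetP (sub_F_ch Pj)).
by split; [exact: subsetP (sub_F_ch Pi) _ Fx | apply/bigcupP; exists i].
Qed.

Lemma sum_bigcup_disjoint (V : nmodType) (E : T -> V) :
  \sum_(x in \bigcup_(i in P) F i) E x = \sum_(i in P) \sum_(x in F i) E x.
Proof.
pose G i := if i \in P then F i else set0.
have -> : \bigcup_(i in P) F i = \bigcup_i G i.
  apply/setP => x; apply/bigcupP/bigcupP => [[i Pi Fx] | [i _]].
    by exists i; rewrite // /G Pi.
  by rewrite /G; case: ifP => [Pi Fx | _]; [exists i | rewrite inE].
rewrite partition_disjoint_bigcup => [|i j ne_ij].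
  rewrite [RHS]big_mkcond; apply: eq_bigr => i _.
  by rewrite /G; case: ifP => // _; rewrite big_set0.
rewrite /G; case: ifP => Pi; last by rewrite -setI_eq0 set0I.
case: ifP => Pj; last by rewrite -setI_eq0 setI0.
exact: disjointWl (sub_F_ch Pi) (disjointWr (sub_F_ch Pj) (disjoint_ch Pi Pj ne_ij)).
Qed.

End DisjointUnion.

Lemma subset_bigcup (I T : finType) (P Q : {set I}) (F G : I -> {set T}) :
  P \subset Q -> {in P, forall i, F i \subset G i} ->
  \bigcup_(i in P) F i \subset \bigcup_(i in Q) G i.
Proof.
move=> sub_PQ sub_FG; apply/bigcupsP => i Pi.
exact: subset_trans (sub_FG i Pi) (bigcup_sup _ (subsetP sub_PQ _ Pi)).
Qed.

Section TwoLevelInputs.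
Variables (R : realDomainType) (T : finType) (K : {set T}) (ch : T -> {set T}).
Variables (k : nat) (a : T -> R).
Hypotheses (cardK : #|K| = k) (card_ch : {in K, forall q, #|ch q| = k}).
Hypothesis disjoint_ch : {in K &, forall q q', q != q' -> [disjoint ch q & ch q']}.
Hypothesis a_ge0 : forall d, 0 <= a d.

Local Notation weight B := (\sum_(d in B) a d).
Local Notation total := (\sum_(q in K) weight (ch q)).

Lemma exists_light_dense_input bn : (bn <= k)%N ->
  exists B : {set T}, [/\ B \subset \bigcup_(q in K) ch q,
    (bn <= #|[set q in K | bn <= #|ch q :&: B|]|)%N &
    k%:R ^+ 2 * weight B <= bn%:R ^+ 2 * total].
Proof.
move=> le_bk.
have /fin_all_exists[P P_spec] : forall q, exists Y : {set T}, q \in K ->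
    [/\ Y \subset ch q, #|Y| = bn & k%:R * weight Y <= bn%:R * weight (ch q)].
  move=> q; have [Kq | _] := boolP (q \in K); last by exists set0.
  have le_b_ch : (bn <= #|ch q|)%N by rewrite card_ch.
  have [Y] := exists_subset_avg_le a le_b_ch.
  by rewrite card_ch //; exists Y.
have sub_P_ch : {in K, forall q, P q \subset ch q} by move=> q /P_spec[].
have le_bK : (bn <= #|K|)%N by rewrite cardK.
have [Q [sub_QK cardQ avgQ]] := exists_subset_avg_le (fun q => weight (P q)) le_bK.
have disjoint_chQ := sub_in2 (subsetP sub_QK) disjoint_ch.
have sub_P_chQ := sub_in1 (subsetP sub_QK) sub_P_ch.
exists (\bigcup_(q in Q) P q); split.
- exact: subset_bigcup.
- rewrite -[leqLHS]cardQ; apply: subset_leq_card; apply/subsetP => q Qq.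
  rewrite inE (subsetP sub_QK _ Qq) (setI_bigcup_disjoint disjoint_chQ sub_P_chQ Qq).
  by case: (P_spec q (subsetP sub_QK _ Qq)) => _ -> _; exact: leqnn.
rewrite (sum_bigcup_disjoint disjoint_chQ sub_P_chQ a); rewrite cardK in avgQ.
have avgP : k%:R * \sum_(q in K) weight (P q) <= bn%:R * total.
  by rewrite !mulr_sumr; apply: ler_sum => q /P_spec[].
have k_ge0 : 0 <= k%:R :> R by [].
have bn_ge0 : 0 <= bn%:R :> R by [].
nra.
Qed.

Lemma exists_heavy_sparse_input an : (an <= k)%N ->
  exists B : {set T}, [/\ B \subset \bigcup_(q in K) ch q,
    (#|[set q in K | an < #|ch q :&: B|]| <= an)%N &
    (2 * an%:R * k%:R - an%:R ^+ 2) * total <= k%:R ^+ 2 * weight B].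
Proof.
move=> le_ak.
have /fin_all_exists[N N_spec] : forall q, exists Y : {set T}, q \in K ->
    [/\ Y \subset ch q, #|Y| = an & an%:R * weight (ch q) <= k%:R * weight Y].
  move=> q; have [Kq | _] := boolP (q \in K); last by exists set0.
  have le_a_ch : (an <= #|ch q|)%N by rewrite card_ch.
  have [Y] := exists_subset_avg_ge a le_a_ch.
  by rewrite card_ch //; exists Y.
pose gain q := weight (ch q) - weight (N q).
have le_aK : (an <= #|K|)%N by rewrite cardK.
have [A [sub_AK cardA avgA]] := exists_subset_avg_ge gain le_aK.
pose F q := if q \in A then ch q else N q.
have sub_F_ch : {in K, forall q, F q \subset ch q}.
  by move=> q Kq; rewrite /F; case: ifP => _; [exact: subxx | have [] := N_spec q Kq].
exists (\bigcup_(q in K) F q); split.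
- exact: subset_bigcup.
- rewrite -[leqRHS]cardA; apply: subset_leq_card; apply/subsetP => q.
  rewrite inE => /andP[Kq]; rewrite (setI_bigcup_disjoint disjoint_ch sub_F_ch Kq) /F.
  by case: ifP => // _; case: (N_spec q Kq) => _ -> _; rewrite ltnn.
have weightF : \sum_(q in K) weight (F q) =
    \sum_(q in K) weight (N q) + \sum_(q in A) gain q.
  rewrite [X in _ + X](eq_bigl (fun q => (q \in K) && (q \in A))); last first.
    by move=> q; rewrite -in_setI (setIidPr sub_AK).
  rewrite big_mkcondr -big_split /=; apply: eq_bigr => q _.
  by rewrite /F /gain; case: ifP => _; rewrite ?addr0 // addrC subrK.
rewrite (sum_bigcup_disjoint disjoint_ch sub_F_ch a) weightF.
rewrite cardK /gain sumrB in avgA.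
have avgN : an%:R * total <= k%:R * \sum_(q in K) weight (N q).
  by rewrite !mulr_sumr; apply: ler_sum => q /N_spec[].
have k_ge0 : 0 <= k%:R :> R by [].
have ka_ge0 : 0 <= k%:R - an%:R :> R by rewrite subr_ge0 ler_nat.
nra.
Qed.

Lemma exists_dense_input_lighter_than_sparse an bn :
  (0 < k)%N -> (an <= k)%N -> (bn <= k)%N -> (bn ^ 2 + an ^ 2 <= 2 * an * k)%N ->
  exists Bp Bn : {set T}, [/\ Bp \subset \bigcup_(q in K) ch q,
    Bn \subset \bigcup_(q in K) ch q,
    (bn <= #|[set q in K | bn <= #|ch q :&: Bp|]|)%N,
    (#|[set q in K | an < #|ch q :&: Bn|]| <= an)%N &
    weight Bp <= weight Bn].
Proof.
move=> k_gt0 le_ak le_bk; rewrite -(ler_nat R) natrD !natrX !natrM => le_ba.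
have [Bp [sub_Bp dense light]] := exists_light_dense_input le_bk.
have [Bn [sub_Bn sparse heavy]] := exists_heavy_sparse_input le_ak.
exists Bp, Bn; split => //.
have total_ge0 : 0 <= total by apply: sumr_ge0 => q _; exact: sumr_ge0.
rewrite -(ler_pM2l (_ : 0 < k%:R ^+ 2)) ?exprn_gt0 ?ltr0n //.
apply: le_trans light (le_trans _ heavy).
by rewrite ler_wpM2r //; lra.
Qed.

End TwoLevelInputs.

Lemma le_sqr_ratio_nat (R : realFieldType) (k an bn : nat) : (0 < k)%N ->
  (bn%:R / k%:R) ^+ 2 <= 2 * (an%:R / k%:R) - (an%:R / k%:R) ^+ 2 :> R ->
  (bn ^ 2 + an ^ 2 <= 2 * an * k)%N.
Proof.
move=> k_gt0 le_ratio; rewrite -(ler_nat R) natrD !natrX !natrM.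
have k_neq0 : k%:R != 0 :> R by rewrite pnatr_eq0 -lt0n.
have := ler_wpM2r (exprn_ge0 2 (ler0n R k)) le_ratio.
have -> : (bn%:R / k%:R) ^+ 2 * k%:R ^+ 2 = bn%:R ^+ 2 :> R by field.
have -> : (2 * (an%:R / k%:R) - (an%:R / k%:R) ^+ 2) * k%:R ^+ 2 =
  2 * an%:R * k%:R - an%:R ^+ 2 :> R by field.
by move=> ?; lra.
Qed.

Section Thresholds.
Variable R : archiRealFieldType.

Lemma floor_threshold (x : R) : 0 <= x -> x \isn't a Num.int ->
  exists2 m : nat, Num.floor x = m%:Z & forall p : nat, (x <= p%:R) = (m < p)%N.
Proof.
move=> x_ge0 x_nonint; have floor_x_ge0 : 0 <= Num.floor x by rewrite floor_ge0.
exists `|Num.floor x|%N => [|p]; first by rewrite gez0_abs.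
rewrite -ltz_nat gez0_abs // floor_lt_int le_eqVlt.
by case: eqP => // x_p; move: x_nonint; rewrite x_p natr_int.
Qed.

Lemma ceil_threshold (x : R) : 0 <= x ->
  exists2 m : nat, Num.ceil x = m%:Z & forall p : nat, (x <= p%:R) = (m <= p)%N.
Proof.
move=> x_ge0; have ceil_x_ge0 : 0 <= Num.ceil x.
  by rewrite ceil_ge0 (lt_le_trans _ x_ge0) // ltrN10.
exists `|Num.ceil x|%N => [|p]; first by rewrite gez0_abs.
by rewrite -lez_nat gez0_abs // ceil_le_int.
Qed.

Lemma integer_thresholds (k : nat) (r1 r2 : R) :
  (0 < k)%N -> 0 <= r1 -> r1 <= r2 -> r2 <= 1 -> r1 * k%:R \isn't a Num.int ->
  let r1' : R := (Num.floor (r1 * k%:R))%:~R / k%:R in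
  let r2' : R := (Num.ceil (r2 * k%:R))%:~R / k%:R in
  r2' ^+ 2 <= 2 * r1' - r1' ^+ 2 ->
  exists an bn : nat, [/\ forall p : nat, (r1 * k%:R <= p%:R) = (an < p)%N,
    forall p : nat, (r2 * k%:R <= p%:R) = (bn <= p)%N,
    (an <= k)%N, (bn <= k)%N & (bn ^ 2 + an ^ 2 <= 2 * an * k)%N].
Proof.
move=> k_gt0 r1_ge0 le_r12 r2_le1 r1k_nonint r1' r2' ratio_ineq.
have [an floor_an r1E] := floor_threshold (mulr_ge0 r1_ge0 (ler0n _ k)) r1k_nonint.
have [bn ceil_bn r2E] := ceil_threshold (mulr_ge0 (le_trans r1_ge0 le_r12) (ler0n _ k)).
have le_bk : (bn <= k)%N by rewrite -r2E ler_piMl.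
exists an, bn; split => //.
- apply/ltnW/(leq_trans _ le_bk); rewrite -r1E.
  by apply: le_trans (ler_wpM2r (ler0n _ k) le_r12) _; rewrite r2E.
- rewrite /r1' /r2' floor_an ceil_bn in ratio_ineq.
  exact: le_sqr_ratio_nat k_gt0 ratio_ineq.
Qed.

End Thresholds.

Section HeightTwoHierarchy.
Variables (R : realType) (D : finType) (lvl : D -> nat) (n k : nat).
Variables (C : {set D}) (children : D -> {set D}).

Lemma Blev_sub (r : R) B l : Blev lvl k C children r B l \subset C :&: Dlev lvl l.
Proof.
by case: l => [|l]; [exact: subsetIr | apply/subsetP => d; rewrite inE => /andP[]].
Qed.

Lemma mem_supported lmax (r : R) B c : (lvl c <= lmax)%N ->
  (c \in supported lvl k C children lmax r B) = (c \in Blev lvl k C children r B (lvl c)).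
Proof.
move=> le_c; apply/bigcupP/idP => [[l _ cB] | cB].
  by move: (subsetP (Blev_sub r B l) c cB); rewrite !inE => /andP[_ /eqP ->].
by exists (Ordinal (le_c : (lvl c < lmax.+1)%N)).
Qed.

Hypothesis hier : is_hierarchy lvl n 2 k C children.

Lemma hierarchy_children l c : c \in C :&: Dlev lvl l.+1 -> (l < 2)%N ->
  children c \subset C :&: Dlev lvl l /\ #|children c| = k.
Proof.
case: hier => _ _ children_spec _ _; rewrite !inE => /andP[cC /eqP lc] lt_l2.
by have := children_spec c cC; rewrite lc; apply.
Qed.

Lemma supported_height2 (r : R) (thr : nat -> bool) B c :
  (forall m : nat, (r * k%:R <= m%:R) = thr m) -> c \in C :&: Dlev lvl 2 ->
  (c \in supported lvl k C children 2 r B) =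
    thr #|[set q in children c | thr #|children q :&: B|]|.
Proof.
move=> thrE c2; have [ch_c _] := hierarchy_children c2 isT.
have lc : lvl c = 2%N by move: c2; rewrite !inE => /andP[_ /eqP].
rewrite mem_supported lc //= inE c2 /= thrE; congr (thr _); apply: eq_card => q.
rewrite !inE; case q_ch: (q \in children c) => //=.
have q1 := subsetP ch_c q q_ch; have [chq_sub _] := hierarchy_children q1 isT.
move: q1; rewrite !inE => /andP[-> ->] /=.
by rewrite thrE [B :&: _]setIC setIA (setIidPl chq_sub).
Qed.

Lemma top_concept_grandchildren c : c \in C :&: Dlev lvl 2 ->
  [/\ #|children c| = k, {in children c, forall q, #|children q| = k},
    {in children c &, forall q q', q != q' -> [disjoint children q & children q']} &
    \bigcup_(q in children c) children q \subset C :&: Dlev lvl 0].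
Proof.
move=> c2; have [ch_c card_ch_c] := hierarchy_children c2 isT.
have ch_q q : q \in children c -> children q \subset C :&: Dlev lvl 0 /\ #|children q| = k.
  by move/(subsetP ch_c)/hierarchy_children; apply.
split => //; [by move=> q /ch_q[] | | by apply/bigcupsP => q /ch_q[]].
case: hier => _ _ _ _ disjoint_children q q' /(subsetP ch_c) + /(subsetP ch_c).
rewrite !inE => /andP[qC /eqP lq] /andP[q'C /eqP lq'].
by apply: disjoint_children; rewrite // ?lq ?lq'.
Qed.

End HeightTwoHierarchy.

Lemma sum_indicator_imset (R : pzSemiRingType) (I T : finType) (g : T -> I)
    (B : {set T}) (f : I -> R) :
  {in B &, injective g} -> \sum_i f i * (i \in g @: B)%:R = \sum_(d in B) f (g d).
Proof.
move=> g_inj; rewrite -(big_imset _ g_inj) [RHS]big_mkcond; apply: eq_bigr => i _.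
by case: (i \in _); rewrite ?mulr1 ?mulr0.
Qed.

Section OneLayerNetwork.
Variables (R : realType) (n : nat) (w : nat -> 'I_n -> 'I_n -> R) (tau : nat -> 'I_n -> R).

Definition steady_run (S : {set 'I_n}) (t l : nat) (i : 'I_n) : bool :=
  if l == 0%N then i \in S else tau l i <= \sum_(i' < n) w l.-1 i' i * (i' \in S)%:R.

Lemma steady_run_execution S : is_execution 1 w tau (steady_run S).
Proof. by move=> t [|[|l]] j. Qed.

Variables (D : finType) (lvl : D -> nat) (lmax k : nat).
Variables (C : {set D}) (children : D -> {set D}) (rep : D -> nat * 'I_n).

Lemma recognizes_linear_threshold r1 r2 c :
  weights_ok 1 w -> input_rep_ok lvl rep ->
  recognizes 1 w tau lvl lmax k C children rep r1 r2 -> c \in C -> (1 <= lvl c)%N ->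
  exists (theta : R) (a : D -> R), (forall d, 0 <= a d) /\
    forall B : {set D}, B \subset C :&: Dlev lvl 0 ->
      (c \in supported lvl k C children lmax r2 B -> theta <= \sum_(d in B) a d) /\
      (theta <= \sum_(d in B) a d -> c \in supported lvl k C children lmax r1 B).
Proof.
move=> w_ok [_ rep_inj _] [rep_layer recog2 recog3] cC lc.
case rep_c: (rep c) => [l j].
have l1 : l = 1%N by move: (rep_layer c cC lc); rewrite rep_c /= -eqn_leq => /eqP.
subst l; exists (tau 1%N j), (fun d => w 0%N (rep d).2 j).
split => [d | B sub_B]; first by case/andP: (w_ok 0%N (rep d).2 j isT).
pose y := steady_run [set (rep d).2 | d in B].
have y_exec : is_execution 1 w tau y := steady_run_execution _.
have y_pres : presented rep y 0 B by [].
have y_fire : y 1%N 1%N j = (tau 1%N j <= \sum_(d in B) w 0%N (rep d).2 j).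
  rewrite /y /steady_run /= sum_indicator_imset //.
  have sub_BD0 := subsetP (subset_trans sub_B (subsetIr _ _)).
  by move=> d d' /sub_BD0 Dd /sub_BD0; exact: rep_inj.
split => [sup | fires].
  by have := recog2 y y_exec 0%N B sub_B y_pres c cC sup; rewrite rep_c /= y_fire.
apply: contraTT fires => unsup.
by have := recog3 y y_exec 0%N B sub_B y_pres c cC unsup; rewrite rep_c /= y_fire.
Qed.

End OneLayerNetwork.

Theorem mainTheorem3 (R : realType) (n k : nat) (D : finType) (lvl : D -> nat)
    (C : {set D}) (children : D -> {set D}) (r1 r2 : R)
    (w : nat -> 'I_n -> 'I_n -> R) (tau : nat -> 'I_n -> R) (rep : D -> nat * 'I_n) :
  (0 < n)%N -> (0 < k)%N ->
  is_hierarchy lvl n 2 k C children ->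
  0 <= r1 -> r1 <= r2 -> r2 <= 1 ->
  r1 * k%:R \isn't a Num.int ->
  let r1' : R := (Num.floor (r1 * k%:R))%:~R / k%:R in
  let r2' : R := (Num.ceil (r2 * k%:R))%:~R / k%:R in
  r2' ^+ 2 <= 2 * r1' - r1' ^+ 2 ->
  weights_ok 1 w ->
  input_rep_ok lvl rep ->
  ~ recognizes 1 w tau lvl 2 k C children rep r1 r2.
Proof.
move=> _ k_gt0 hier r1_ge0 le_r12 r2_le1 r1k_nonint r1' r2' ratio_ineq w_ok rep_ok recog.
have [an [bn [r1E r2E le_ak le_bk ab_ineq]]] :=
  integer_thresholds k_gt0 r1_ge0 le_r12 r2_le1 r1k_nonint ratio_ineq.
have [c c2] : exists c, c \in C :&: Dlev lvl 2 by apply/card_gt0P; case: hier => _ _ _ ->.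
have [cC lc] : c \in C /\ (1 <= lvl c)%N by move: c2; rewrite !inE => /andP[-> /eqP ->].
have [theta [a [a_ge0 unit]]] := recognizes_linear_threshold w_ok rep_ok recog cC lc.
have [card_ch_c card_chq disjoint_chq sub_D0] := top_concept_grandchildren hier c2.
have [Bp [Bn [sub_Bp sub_Bn dense sparse light]]] :=
  exists_dense_input_lighter_than_sparse card_ch_c card_chq disjoint_chq a_ge0
    k_gt0 le_ak le_bk ab_ineq.
have [fires _] := unit Bp (subset_trans sub_Bp sub_D0).
have [_ silent] := unit Bn (subset_trans sub_Bn sub_D0).
have Bp_supported : c \in supported lvl k C children 2 r2 Bp.
  by rewrite (supported_height2 hier (thr := fun m => (bn <= m)%N) Bp r2E c2).
have := silent (le_trans (fires Bp_supported) light).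
by rewrite (supported_height2 hier (thr := fun m => (an < m)%N) Bn r1E c2) ltnNge sparse.
Qed.
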